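(* Let $G$ be a finite nilpotent group and let $V=\{1,v_1,v_2,v_3\}$ be a four-group acting on $G$ by automorphisms with $C_G(V)=1$. Put $G_i=C_G(v_i)$ for $i=1,2,3$. For $x\in G_i$ and $y\in G_j$ with $i\neq j$, let $k$ be such that $\{i,j,k\}=\{1,2,3\}$ and define $x*y=s$, where $(s,t)\in G_k\times G_j$ is the unique pair with $y^x=sts$. Define $R_1=\langle a*b : a\in G_2,b\in G_3\rangle$, $R_2=\langle a*b : a\in G_1,b\in G_3\rangle$, $R_3=\langle a*b : a\in G_1,b\in G_2\rangle$. Then $G_i\cap G'=R_i$ for $i=1,2,3$.
   Context: $G'$ is the derived subgroup of $G$. It is known that under these hypotheses $G$ has odd order, each $G_i$ is abelian, and for $x\in G_i$, $y\in G_j$ with $i\ne j$ the element $y^x$ is inverted by $v_i$, so there is a unique pair $(s,t)\in G_k\times G_j$ with $y^x=sts$; hence $x*y$ is well defined. *)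

From mathcomp Require Import all_boot all_fingroup all_solvable.
Set Implicit Arguments.
Unset Strict Implicit.
Unset Printing Implicit Defensive.
Local Open Scope group_scope.

(* x * y for x in G_i, y in G_j (i <> j), with {i,j,k} = {1,2,3}:
   the s in G_k such that y^x = s t s for some (unique) t in G_j.
   [star Gk Gj x y] picks such an s (default 1 if none exists; under
   the hypotheses of the paper the pair (s,t) exists and is unique). *)
Definition star (gT : finGroupType) (Gk Gj : {set gT}) (x y : gT) : gT :=
  odflt 1 [pick s in Gk | [exists t in Gj, y ^ x == s * t * s]].

Definition starGen (gT : finGroupType) (Gi Gj Gk : {set gT}) : {set gT} :=
  <<[set star Gk Gj a b | a in Gi, b in Gj]>>.

From mathcomp Require Import all_boot all_fingroup all_solvable.
Set Implicit Arguments.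
Unset Strict Implicit.
Unset Printing Implicit Defensive.
Local Open Scope group_scope.

(* Write V = {1, a, b, c} and R = <x * y : x in C_G[a], y in C_G[b]>. As C_G[a] and
   C_G[b] meet trivially, h |-> h^-1 h^b is injective on C_G[a], so b inverts C_G[a].
   With square roots in the odd-order group G this shows that every w inverted by a is
   s t s for a unique s in C_G[c] and some t in C_G[b]: x * y is well defined and commutes
   with quotient maps. As x * y = 1 when x and y commute, R maps to 1 in the abelian group
   G/G', so R <= C_G[c] :&: G'.
   Conversely, induct on |G| and let N = [M, G] be the last nontrivial term of the lower
   central series. Modulo N the claim holds by induction, and as N is central the
   commutator map M x G -> N is bimultiplicative. M and G are generated by their a-, b-
   and c-fixed points; on those, [y, x] = (x * y)^2 for x in C_G[a], y in C_G[b], and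
   every other commutator is trivial or inverted by c. So n n^c lies in R for all n in N,
   which is n^2, hence n itself, when n is c-fixed. *)

Lemma subcent1_conjE (gT : finGroupType) (A : {set gT}) a x :
  (x \in 'C_A[a]) = (x \in A) && (x ^ a == x).
Proof. by rewrite inE (sameP cent1P commgP) conjg_fix. Qed.

Lemma invg_involution (gT : finGroupType) (x : gT) : x ^+ 2 = 1 -> x^-1 = x.
Proof. by move=> x2; apply/eqP; rewrite eq_invg_mul -expg2 x2. Qed.

Lemma conjg_involutionK (gT : finGroupType) (x a : gT) : a ^+ 2 = 1 -> (x ^ a) ^ a = x.
Proof. by move=> a2; rewrite -conjgM -expg2 a2 conjg1. Qed.

Section OddOrder.
Variables (gT : finGroupType) (G : {group gT}).
Hypothesis oddG : odd #|G|.
Implicit Types (H : {group gT}) (a d u x : gT).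

Local Notation sqrtg x := (x ^+ expg_invn G 2).

Lemma odd_sqrgK : {in G, forall x, sqrtg (x ^+ 2) = x}.
Proof. by apply: expgK; rewrite coprimen2. Qed.

Lemma odd_sqrtgK : {in G, forall x, sqrtg x ^+ 2 = x}.
Proof. by move=> x Gx; rewrite expgAC odd_sqrgK. Qed.

Lemma odd_sqrg_inj : {in G &, injective (fun x => x ^+ 2)}.
Proof. by move=> x y Gx Gy /= xy; rewrite -(odd_sqrgK Gx) xy odd_sqrgK. Qed.

Lemma odd_invg_fix x : x \in G -> x^-1 = x -> x = 1.
Proof.
by move=> Gx xV; apply: odd_sqrg_inj; rewrite ?group1 // expg2 -{1}xV mulVg expg1n.
Qed.

Lemma odd_conjg_invg_eq1 u d : u \in G -> d \in G -> d ^ u = d^-1 -> d = 1.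
Proof.
move=> Gu Gd du; apply: odd_invg_fix => //.
have cdu2 : u ^+ 2 \in 'C[d].
  by apply/cent1P/commgP; rewrite commg1_sym -conjg_fix expg2 conjgM du conjVg du invgK.
rewrite -{1}du -(odd_sqrgK Gu); apply/conjg_fixP; rewrite commg1_sym.
by apply/commgP/cent1P; rewrite groupX.
Qed.

(* With q the square root of x^a x^-1, the fixed part is q x. *)
Lemma odd_involution_split H a x : H \subset G -> a \in 'N(H) -> a ^+ 2 = 1 ->
  x \in H -> exists2 y, y \in 'C_H[a] & (y^-1 * x) ^ a = (y^-1 * x)^-1.
Proof.
move=> sHG nHa a2 Hx; set p := x ^ a * x^-1.
have Hp : p \in H by rewrite groupM ?groupV ?memJ_norm.
have pa : p ^ a = p^-1 by rewrite /p conjMg conjVg conjg_involutionK // [RHS]invMg invgK.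
set q := sqrtg p; have Hq : q \in H by rewrite groupX.
have qa : q ^ a = q^-1 by rewrite conjXg pa expVgn.
have xa : x ^ a = q * q * x by rewrite -expg2 odd_sqrtgK ?(subsetP sHG) ?mulgKV.
exists (q * x).
  by rewrite subcent1_conjE groupM //= conjMg qa xa -mulgA mulKg.
have qJ : q ^ (q * q * x) = q ^ x.
  by rewrite !conjgM (conjgE q q) mulKg (conjgE q q) mulKg.
by rewrite invMg -mulgA -conjgE conjJg conjVg qa invgK xa qJ conjVg invgK.
Qed.

Lemma odd_sandwich_inj u r r' : u \in G -> r \in G -> r' \in G -> commute r r' ->
  r * u * r = r' * u * r' -> r = r'.
Proof.
move=> Gu Gr Gr' crr' e; set d := r'^-1 * r.
have rd : r = r' * d by rewrite mulKVg.
have dr : r = d * r' by rewrite /d -mulgA crr' mulKg.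
have dud : d * u * d = u.
  by apply: (mulgI r'); apply: (mulIg r'); rewrite -e {1}rd dr !mulgA.
suff d1 : d = 1 by rewrite rd d1 mulg1.
apply: (odd_conjg_invg_eq1 Gu); first by rewrite groupM ?groupV.
by rewrite conjgE; apply: (mulgI u); rewrite mulKVg -{2}dud mulgK.
Qed.

End OddOrder.

Section FourGroupAction.
Variable gT : finGroupType.
Implicit Types (G H : {group gT}) (a b c s t u w x y : gT).

(* [a], [b], [c] are the involutions of a four-group V acting on [G]; each pairwise
   intersection of their centralisers is C_G(V). *)
Definition fpf_four G a b c :=
  [/\ odd #|G|, [&& a \in 'N(G), b \in 'N(G) & c \in 'N(G)],
      [/\ a ^+ 2 = 1, b ^+ 2 = 1 & c ^+ 2 = 1], a * b * c = 1
    & [/\ 'C_G[a] :&: 'C_G[b] = 1, 'C_G[a] :&: 'C_G[c] = 1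
        & 'C_G[b] :&: 'C_G[c] = 1]].

Lemma fpf_four_mul G a b c : fpf_four G a b c -> a * b = c.
Proof. by case=> _ _ [_ _ c2] abc _; apply: (mulIg c); rewrite abc -expg2 c2. Qed.

Lemma fpf_four_perm12 G a b c : fpf_four G a b c -> fpf_four G b a c.
Proof.
move=> fG; have [oG /and3P[nGa nGb nGc] [a2 b2 c2] _ [tiab tiac tibc]] := fG.
split; rewrite ?nGa ?nGb ?nGc //; last by split; rewrite // setIC.
by rewrite -(invg_involution a2) -(invg_involution b2) -invMg (fpf_four_mul fG) mulVg.
Qed.

Lemma fpf_four_perm23 G a b c : fpf_four G a b c -> fpf_four G a c b.
Proof.
move=> fG; have [oG /and3P[nGa nGb nGc] [a2 b2 c2] _ [tiab tiac tibc]] := fG.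
split; rewrite ?nGa ?nGb ?nGc //; last by split; rewrite // setIC.
by rewrite -(fpf_four_mul fG) mulgA -expg2 a2 mul1g -expg2 b2.
Qed.

Lemma fpf_four_rot G a b c : fpf_four G a b c -> fpf_four G b c a.
Proof. by move=> fG; apply/fpf_four_perm23/fpf_four_perm12. Qed.

Lemma fpf_four_perm13 G a b c : fpf_four G a b c -> fpf_four G c b a.
Proof. by move=> fG; apply/fpf_four_perm12/fpf_four_rot. Qed.

Lemma fpf_four_inv G a b c x : fpf_four G a b c -> x \in 'C_G[a] -> x ^ b = x^-1.
Proof.
move=> fG Cx; have [_ /and3P[_ nGb _] [_ b2 _] _ [tiab _ _]] := fG.
have ab := fpf_four_mul fG; have ba := fpf_four_mul (fpf_four_perm12 fG).
set C := 'C_G[a] in Cx *.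
have Cb h : h \in C -> h ^ b \in C.
  rewrite /C !subcent1_conjE => /andP[Gh /eqP ha].
  by rewrite memJ_norm // Gh -conjgM ba -ab conjgM ha eqxx.
pose f h := h^-1 * h ^ b.
have f_inj : {in C &, injective f}.
  move=> h g Ch Cg; rewrite /f => fhg.
  have e : g * h^-1 = g ^ b * (h ^ b)^-1.
    by apply: (mulIg (h ^ b)); rewrite mulgKV -mulgA fhg mulKVg.
  have : g * h^-1 \in C :&: 'C_G[b].
    rewrite inE groupM ?groupV //= subcent1_conjE conjMg conjVg -e eqxx andbT.
    by rewrite groupM ?groupV ?(subsetP (subsetIl G 'C[a])).
  by rewrite tiab => /set1P/eqP; rewrite -eq_mulgV1 => /eqP.
have fCC : f @: C = C.
  apply/eqP; rewrite eqEcard card_in_imset // leqnn andbT.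
  by apply/subsetP => _ /imsetP[h Ch ->]; rewrite groupM ?groupV ?Cb.
move: Cx; rewrite -fCC => /imsetP[h _ ->].
by rewrite /f conjMg conjVg conjg_involutionK // [RHS]invMg invgK.
Qed.

Lemma fpf_four_abelian G a b c : fpf_four G a b c -> abelian 'C_G[a].
Proof.
move=> fG; apply/centsP => x Cx y Cy.
have := fpf_four_inv fG (groupM Cx Cy).
by rewrite conjMg (fpf_four_inv fG Cx) (fpf_four_inv fG Cy) -invMg => /invg_inj.
Qed.

Lemma fpf_four_sts G H a b c w : fpf_four G a b c -> H \subset G ->
    a \in 'N(H) -> b \in 'N(H) -> w \in H -> w ^ a = w^-1 ->
  exists2 s, s \in 'C_H[c] & exists2 t, t \in 'C_H[b] & w = s * t * s.
Proof.
move=> fG sHG nHa nHb Hw wa; have [oG _ _ _ _] := fG.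
have ab := fpf_four_mul fG; have bc := fpf_four_mul (fpf_four_rot fG).
have sqrtK := odd_sqrtgK oG; have sHG' := subsetP sHG.
set u := w ^ b; have Hu : u \in H by rewrite memJ_norm.
have wc : w ^ c = u^-1 by rewrite -ab conjgM wa conjVg.
have uc : u ^ c = w^-1 by rewrite -conjgM bc.
set p := w * u; have Hp : p \in H by rewrite groupM.
have pc : p ^ c = p^-1 by rewrite /p conjMg wc uc [RHS]invMg.
set q := p ^+ expg_invn G 2; have Hq : q \in H by rewrite groupX.
have qc : q ^ c = q^-1 by rewrite /q conjXg pc expVgn.
(* [r] is the [c]-fixed solution of [r * u * r = w]; [s] is its square root. *)
set r := q * u^-1; have Hr : r \in H by rewrite groupM ?groupV.
have rur : r * u * r = w by rewrite /r mulgKV mulgA -expg2 sqrtK ?sHG' // mulgK.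
have Cr : r \in 'C_H[c].
  rewrite subcent1_conjE Hr /r conjMg conjVg qc uc invgK; apply/eqP.
  by apply: (mulgI q); rewrite mulKVg mulgA -expg2 sqrtK ?sHG' // mulgK.
set s := r ^+ expg_invn G 2; have Cs : s \in 'C_H[c] by rewrite groupX.
have rs : r = s * s by rewrite -expg2 sqrtK ?sHG'.
have [Hs _] := setIP Cs.
have sb : s ^ b = s^-1.
  exact: fpf_four_inv (fpf_four_perm13 fG) (subsetP (setSI _ sHG) s Cs).
exists s => //; exists (s^-1 * w * s^-1); last by rewrite !mulgA mulgV mul1g mulgKV.
rewrite subcent1_conjE !groupM ?groupV //= !conjMg conjVg sb invgK -/u; apply/eqP.
by rewrite -rur rs !mulgA mulVg mul1g mulgK.
Qed.

Lemma fpf_four_sts_uniq G a b c s t s' t' : fpf_four G a b c ->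
    s \in 'C_G[c] -> t \in 'C_G[b] -> s' \in 'C_G[c] -> t' \in 'C_G[b] ->
  s * t * s = s' * t' * s' -> s = s'.
Proof.
move=> fG Cs Ct Cs' Ct' e; have [oG /and3P[_ nGb _] _ _ _] := fG.
have invCc := fpf_four_inv (fpf_four_perm13 fG).
have sqr_sts x y : x \in 'C_G[c] -> y \in 'C_G[b] ->
    x ^+ 2 * (x * y * x) ^ b * x ^+ 2 = x * y * x.
  move=> Cx; rewrite subcent1_conjE => /andP[_ /eqP yb].
  by rewrite !conjMg invCc // yb expg2 !mulgA mulgK mulgKV.
have [Gs _] := setIP Cs; have [Gs' _] := setIP Cs'.
have Gu : (s * t * s) ^ b \in G.
  by rewrite memJ_norm // !groupM //; case/setIP: Ct.
apply: (odd_sqrg_inj oG) => //; apply: (odd_sandwich_inj oG Gu); rewrite ?groupX //.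
  exact: commuteX2 (centsP (fpf_four_abelian (fpf_four_perm13 fG)) _ Cs _ Cs').
by rewrite sqr_sts // e sqr_sts.
Qed.

Lemma star_fpf_four G a b c x y s t : fpf_four G a b c ->
  s \in 'C_G[c] -> t \in 'C_G[b] -> y ^ x = s * t * s -> star 'C_G[c] 'C_G[b] x y = s.
Proof.
move=> fG Cs Ct e; rewrite /star.
case: pickP => [s' /andP[Cs' /existsP[t' /andP[Ct' /eqP e']]] | no_s] /=.
  by apply: (fpf_four_sts_uniq fG Cs' Ct' Cs Ct); rewrite -e' e.
by move: (no_s s); rewrite Cs; case/existsP; exists t; rewrite Ct e eqxx.
Qed.

Lemma star_commute G a b c x y : fpf_four G a b c -> y \in 'C_G[b] ->
  commute y x -> star 'C_G[c] 'C_G[b] x y = 1.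
Proof.
move=> fG Cy cyx; apply: (star_fpf_four fG (group1 _) Cy).
by rewrite mul1g mulg1; apply/conjg_fixP/commgP.
Qed.

Lemma star_subcent1 G b c x y : star 'C_G[c] 'C_G[b] x y \in 'C_G[c].
Proof. by rewrite /star; case: pickP => [s /andP[]|] //= _; rewrite group1. Qed.

Lemma fpf_four_gen G H a b c : fpf_four G a b c -> H \subset G ->
  a \in 'N(H) -> b \in 'N(H) -> H \subset <<'C_H[a] :|: 'C_H[b] :|: 'C_H[c]>>.
Proof.
move=> fG sHG nHa nHb; have [oG _ [a2 _ _] _ _] := fG.
apply/subsetP => x Hx; have [y Cy za] := odd_involution_split oG sHG nHa a2 Hx.
have Hz : y^-1 * x \in H by rewrite groupM ?groupV //; case/setIP: Cy.
have [s Cs [t Ct zE]] := fpf_four_sts fG sHG nHa nHb Hz za.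
rewrite -(mulKVg y x) zE !groupM ?mem_gen //.
all: by rewrite !in_setU ?Cy ?Cs ?Ct ?orbT.
Qed.

End FourGroupAction.

Section Quotients.
Variable gT : finGroupType.
Implicit Types (G K : {group gT}) (a b c x y : gT).

Lemma char_norm1 G K x : K \char G -> x \in 'N(G) -> x \in 'N(K).
Proof. by move=> chK nGx; rewrite -sub1set (char_norm_trans chK) ?sub1set. Qed.

Lemma quotient_subcent1_odd G K a : odd #|G| -> K \subset G -> a \in 'N(K) ->
  a ^+ 2 = 1 -> 'C_G[a] / K = 'C_(G / K)[coset K a].
Proof.
move=> oG sKG nKa a2; rewrite -!cent_cycle -quotient_cycle //.
apply: strongest_coprime_quotient_cent; rewrite ?cycle_subG ?subIset ?sKG //.
  rewrite (coprimeSg (subset_trans (subsetIl _ _) sKG)) //.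
  by apply: (@coprime_dvdr _ 2); rewrite ?order_dvdn ?a2 ?coprimen2.
by rewrite orbC abelian_sol ?cycle_abelian.
Qed.

Lemma quotient_fpf_four_TI G K a b c : fpf_four G a b c -> K \char G ->
  odd #|G / K| -> 'C_(G / K)[coset K a] :&: 'C_(G / K)[coset K b] = 1.
Proof.
move=> fG chK oQ; have [oG /and3P[nGa nGb _] [a2 _ _] _ _] := fG.
have [sKG _] := andP (char_normal chK); have nK := char_norm1 chK.
apply/eqP; rewrite eqEsubset sub1G andbT -quotient_subcent1_odd ?nK //.
apply/subsetP => _ /setIP[/morphimP[x nKx Cx ->]].
rewrite /= subcent1_conjE -morphJ // ?nK // (fpf_four_inv fG Cx) morphV //.
case/andP=> Qx /eqP xV.
by rewrite inE (odd_invg_fix oQ Qx xV).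
Qed.

Lemma fpf_four_quotient G K a b c : fpf_four G a b c -> K \char G ->
  fpf_four (G / K) (coset K a) (coset K b) (coset K c).
Proof.
move=> fG chK; have [oG /and3P[nGa nGb nGc] [a2 b2 c2] abc _] := fG.
have [sKG nKG] := andP (char_normal chK); have nK := char_norm1 chK.
have oQ : odd #|G / K| by rewrite card_quotient // (dvdn_odd (dvdn_indexg G K)).
have nQ x : x \in 'N(G) -> coset K x \in 'N(G / K).
  by move=> nGx; rewrite -sub1set -quotient_set1 ?nK // quotient_norms ?sub1set.
split=> //; first by rewrite !nQ.
- by split; rewrite -morphX ?nK // ?a2 ?b2 ?c2 morph1.
- by rewrite -!morphM ?groupM ?nK // abc morph1.
split; [exact: quotient_fpf_four_TI fG chK oQ
  | exact: quotient_fpf_four_TI (fpf_four_perm23 fG) chK oQ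
  | exact: quotient_fpf_four_TI (fpf_four_rot fG) chK oQ].
Qed.

Lemma morph_star G K a b c x y : fpf_four G a b c -> K \char G ->
    x \in 'C_G[a] -> y \in 'C_G[b] ->
  coset K (star 'C_G[c] 'C_G[b] x y)
    = star 'C_(G / K)[coset K c] 'C_(G / K)[coset K b] (coset K x) (coset K y).
Proof.
move=> fG chK Cx Cy; have [oG /and3P[nGa nGb nGc] [_ b2 c2] _ _] := fG.
have [sKG nKG] := andP (char_normal chK); have nK := char_norm1 chK.
have nKG' := subsetP nKG.
move: (Cx) (Cy); rewrite !subcent1_conjE => /andP[Gx /eqP xa] /andP[Gy _].
have ya := fpf_four_inv (fpf_four_perm12 fG) Cy.
have wa : (y ^ x) ^ a = (y ^ x)^-1 by rewrite conjJg xa ya conjVg.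
have [s Cs [t Ct e]] := fpf_four_sts fG (subxx G) nGa nGb (groupJ Gy Gx) wa.
have [Gs _] := setIP Cs; have [Gt _] := setIP Ct.
rewrite (star_fpf_four fG Cs Ct e).
apply/esym/(star_fpf_four (t := coset K t) (fpf_four_quotient fG chK)).
- by rewrite -quotient_subcent1_odd ?nK //; apply: mem_quotient.
- by rewrite -quotient_subcent1_odd ?nK //; apply: mem_quotient.
by rewrite -morphJ ?nKG' // e !morphM ?groupM ?nKG'.
Qed.

Lemma starGen_sub G a b c : fpf_four G a b c ->
  starGen 'C_G[a] 'C_G[b] 'C_G[c] \subset 'C_G[c] :&: G^`(1).
Proof.
move=> fG; rewrite gen_subG; apply/subsetP => _ /imset2P[x y Cx Cy ->].
have [oG /and3P[_ nGb _] [_ b2 _] _ _] := fG.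
have chD := der_char 1 G; have [sDG nDG] := andP (char_normal chD).
have [Gs _] := setIP (star_subcent1 G b c x y).
have [[Gx _] [Gy _]] := (setIP Cx, setIP Cy).
rewrite inE star_subcent1 /=; apply: coset_idr; first exact: subsetP nDG _ Gs.
rewrite (morph_star fG chD Cx Cy) (star_commute (fpf_four_quotient fG chD)) //.
  by rewrite -quotient_subcent1_odd ?(char_norm1 chD) //; apply: mem_quotient.
by apply: (centsP (sub_der1_abelian (subxx _))); apply: mem_quotient.
Qed.

Lemma quotient_starGen G K a b c : fpf_four G a b c -> K \char G ->
  starGen 'C_(G / K)[coset K a] 'C_(G / K)[coset K b] 'C_(G / K)[coset K c]
    \subset starGen 'C_G[a] 'C_G[b] 'C_G[c] / K.
Proof.
move=> fG chK; have [oG /and3P[nGa nGb _] [a2 b2 _] _ _] := fG.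
have [sKG _] := andP (char_normal chK); have nK := char_norm1 chK.
have CbQ := quotient_subcent1_odd oG sKG (nK _ nGb) b2.
rewrite gen_subG -(quotient_subcent1_odd oG sKG (nK _ nGa) a2) -CbQ.
apply/subsetP => _ /imset2P[_ _ /morphimP[x _ Cx ->] /morphimP[y _ Cy ->] ->].
by rewrite /= CbQ -(morph_star fG chK Cx Cy); apply/mem_quotient/mem_gen/imset2_f.
Qed.

End Quotients.

Section CentralCommutators.
Variable gT : finGroupType.
Implicit Types (G M S : {group gT}) (a b c x y : gT).

(* A commutator map with central values is bimultiplicative. *)
Lemma mem_commg_gen G S (X Y : {set gT}) :
    X \subset G -> Y \subset G -> S \subset 'C(G) ->
    {in X & Y, forall x y, [~ x, y] \in S} ->
  {in <<X>> & <<Y>>, forall x y, [~ x, y] \in S}.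
Proof.
move=> sXG sYG cSG XYS.
have SJ n z : n \in S -> z \in G -> n ^ z = n.
  by move=> Sn Gz; apply/conjg_fixP/commgP/(centP (subsetP cSG n Sn)).
have gsetL y : y \in G -> group_set [set x in G | [~ x, y] \in S].
  move=> Gy; apply/group_setP; split=> [|x1 x2]; first by rewrite inE group1 comm1g group1.
  by rewrite !inE => /andP[Gx1 S1] /andP[Gx2 S2]; rewrite groupM // commMgJ SJ // groupM.
have gsetR x : x \in G -> group_set [set y in G | [~ x, y] \in S].
  move=> Gx; apply/group_setP; split=> [|y1 y2]; first by rewrite inE group1 commg1 group1.
  by rewrite !inE => /andP[Gy1 S1] /andP[Gy2 S2]; rewrite groupM // commgMJ SJ // groupM.
move=> x y Xx Yy; have Gx : x \in G by apply: subsetP Xx; rewrite gen_subG.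
suff /subsetP/(_ y Yy)/setIdP[] : <<Y>> \subset Group (gsetR x Gx) by [].
rewrite gen_subG; apply/subsetP => z Yz; have Gz := subsetP sYG z Yz.
suff /subsetP/(_ x Xx)/setIdP[] : <<X>> \subset Group (gsetL z Gz) by rewrite inE Gz.
by rewrite gen_subG; apply/subsetP => t Xt; rewrite inE (subsetP sXG) ?XYS.
Qed.

Lemma central_comm_starGen G a b c x y : fpf_four G a b c ->
    x \in 'C_G[a] -> y \in 'C_G[b] -> [~ y, x] \in 'C_G[c] -> [~ y, x] \in 'C(G) ->
  [~ y, x] \in starGen 'C_G[a] 'C_G[b] 'C_G[c].
Proof.
move=> fG Cx Cy Ck Zk; have [oG _ _ _ _] := fG.
have [[Gk _] [Gy _]] := (setIP Ck, setIP Cy).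
set s := [~ y, x] ^+ expg_invn G 2.
have s2 : s ^+ 2 = [~ y, x] := odd_sqrtgK oG Gk.
have e : y ^ x = s * y * s.
  by rewrite conjg_mulR -s2 expg2 mulgA -(centP (groupX _ Zk) y Gy).
have Cs : s \in 'C_G[c] by rewrite groupX.
by rewrite -s2 groupX // -(star_fpf_four fG Cs Cy e) mem_gen ?imset2_f.
Qed.

Lemma fpf_four_central_comm G a b c x y : fpf_four G a b c ->
    x \in 'C_G[a] :|: 'C_G[b] :|: 'C_G[c] -> y \in 'C_G[a] :|: 'C_G[b] :|: 'C_G[c] ->
    [~ x, y] \in 'C(G) ->
  [~ x, y] ^ c = [~ x, y]^-1 \/ [~ x, y] \in starGen 'C_G[a] 'C_G[b] 'C_G[c].
Proof.
move=> fG Ux Uy Zk; set R := starGen _ _ _.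
have invc z : z \in 'C_G[a] :|: 'C_G[b] -> z ^ c = z^-1.
  case/setUP; [exact: fpf_four_inv (fpf_four_perm23 fG)
             | exact: fpf_four_inv (fpf_four_rot fG)].
have fixc z : z \in 'C_G[c] -> z ^ c = z by rewrite subcent1_conjE => /andP[_ /eqP].
have subG z : z \in 'C_G[a] :|: 'C_G[b] :|: 'C_G[c] -> z \in G.
  by case/setUP => [/setUP[]|] /setIP[].
have [Gx Gy] := (subG x Ux, subG y Uy).
have ckx : commute x [~ x, y] := commute_sym (centP Zk x Gx).
have cky : commute y [~ x, y] := commute_sym (centP Zk y Gy).
have trivR : commute x y -> [~ x, y] \in R by move/commgP/eqP->; apply: group1.
case/setUP: Ux => [Ux | Cx]; case/setUP: Uy => [Uy | Cy].
- right; have kc : [~ x, y] ^ c = [~ x, y].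
    rewrite conjRg !invc // commgV (commVg ckx) ?invgK //.
    exact: commuteV.
  have Ck : [~ x, y] \in 'C_G[c] by rewrite subcent1_conjE groupR // kc eqxx.
  case/setUP: Ux => Cx; case/setUP: Uy => Cy.
  + by apply: trivR; apply: (centsP (fpf_four_abelian fG)).
  + rewrite -invg_comm groupV; apply: central_comm_starGen fG Cx Cy _ _;
      by rewrite -invg_comm groupV.
  + exact: central_comm_starGen fG Cy Cx Ck Zk.
  + by apply: trivR; apply: (centsP (fpf_four_abelian (fpf_four_perm12 fG))).
- by left; rewrite conjRg invc // fixc // commVg.
- by left; rewrite conjRg fixc // invc // commgV.
by right; apply: trivR; apply: (centsP (fpf_four_abelian (fpf_four_perm13 fG))).
Qed.

(* The map n |-> n n^c is a homomorphism on the central subgroup [M, G]; it sends the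
   generating commutators into R, and it is squaring on [c]-fixed points. *)
Lemma fpf_four_central_commg G M a b c : fpf_four G a b c -> M \subset G ->
    a \in 'N(M) -> b \in 'N(M) -> [~: M, G] \subset 'C(G) ->
  [~: M, G] :&: 'C_G[c] \subset starGen 'C_G[a] 'C_G[b] 'C_G[c].
Proof.
move=> fG sMG nMa nMb cNG; have [oG /and3P[nGa nGb nGc] _ _ _] := fG.
set N := [~: M, G]; set R := starGen _ _ _.
have sNG : N \subset G by rewrite comm_subG.
have nNc : c \in 'N(N).
  by rewrite -sub1set normsR ?sub1set // -(fpf_four_mul fG) groupM.
have RcC : R \subset 'C_G[c] := subset_trans (starGen_sub fG) (subsetIl _ _).
have fixRc n : n \in R -> n ^ c = n.
  by move/(subsetP RcC); rewrite subcent1_conjE => /andP[_ /eqP].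
have gS : group_set [set n in N | n * n ^ c \in R].
  apply/group_setP; split; first by rewrite inE group1 conj1g mulg1 group1.
  move=> x y /setIdP[Nx xR] /setIdP[Ny yR]; rewrite inE groupM //= conjMg.
  have Gxc : x ^ c \in G by rewrite (subsetP sNG) ?memJ_norm.
  suff -> : x * y * (x ^ c * y ^ c) = x * x ^ c * (y * y ^ c) by rewrite groupM.
  by rewrite mulgA -(mulgA x y) (centP (subsetP cNG _ Ny) _ Gxc) !mulgA.
pose X := 'C_M[a] :|: 'C_M[b] :|: 'C_M[c].
pose Y := 'C_G[a] :|: 'C_G[b] :|: 'C_G[c].
have sXY : X \subset Y by rewrite !setUSS ?setSI.
have sNS : N \subset Group gS.
  rewrite /N /commutator gen_subG; apply/subsetP => _ /imset2P[x y Mx Gy ->].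
  apply: (@mem_commg_gen G (Group gS) X Y).
  - by rewrite !subUset !(subset_trans (subsetIl _ _) sMG).
  - by rewrite !subUset !subsetIl.
  - by apply: subset_trans cNG; apply/subsetP => n /setIdP[].
  - move=> u v Xu Yv; have Nk : [~ u, v] \in N.
      rewrite mem_commg //; first by move: Xu; rewrite !inE => /orP[/orP[]|] /andP[].
      by move: Yv; rewrite !inE => /orP[/orP[]|] /andP[].
    rewrite inE Nk /=.
    have [-> | Rk] := fpf_four_central_comm fG (subsetP sXY u Xu) Yv (subsetP cNG _ Nk).
      by rewrite mulgV group1.
    by rewrite fixRc // groupM.
  - exact: subsetP (fpf_four_gen fG sMG nMa nMb) x Mx.
  - exact: subsetP (fpf_four_gen fG (subxx G) nGa nGb) y Gy.
apply/subsetP => n /setIP[Nn Cn]; have [_] := setIdP (subsetP sNS n Nn).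
move: Cn; rewrite subcent1_conjE => /andP[Gn /eqP ->]; rewrite -expg2 => n2R.
by rewrite -(odd_sqrgK oG Gn) groupX.
Qed.

End CentralCommutators.

Lemma nilpotent_central_commg (gT : finGroupType) (G : {group gT}) :
    nilpotent G -> ~~ abelian G ->
  exists2 M : {group gT}, M \char G & [~: M, G] != 1 /\ [~: M, G] \subset 'C(G).
Proof.
move=> nilG; rewrite -nil_class1; case def_n: (nil_class G) => [|[|m]] // _.
exists 'L_m.+1(G)%G; first exact: lcn_char.
rewrite -lcnSn; split.
  by apply/eqP => /(lcn_nil_classP _ nilG); rewrite def_n ltnn.
by apply/commG1P; rewrite -lcnSn; apply/(lcn_nil_classP _ nilG); rewrite def_n.
Qed.

Lemma subcent1_der1_lift (gT : finGroupType) (G K : {group gT}) a b c :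
    fpf_four G a b c -> K \char G ->
    K :&: 'C_G[c] \subset starGen 'C_G[a] 'C_G[b] 'C_G[c] ->
    'C_(G / K)[coset K c] :&: (G / K)^`(1)
      \subset starGen 'C_(G / K)[coset K a] 'C_(G / K)[coset K b] 'C_(G / K)[coset K c] ->
  'C_G[c] :&: G^`(1) \subset starGen 'C_G[a] 'C_G[b] 'C_G[c].
Proof.
move=> fG chK sKR sQR; have [oG /and3P[_ _ nGc] [_ _ c2] _ _] := fG.
have [sKG nKG] := andP (char_normal chK); have nKG' := subsetP nKG.
apply/subsetP => x /setIP[Cx Dx]; have [Gx _] := setIP Cx.
have : coset K x \in starGen 'C_G[a] 'C_G[b] 'C_G[c] / K.
  apply: subsetP (subset_trans sQR (quotient_starGen fG chK)) _ _.
  rewrite inE -quotient_subcent1_odd ?(char_norm1 chK) // mem_quotient //=.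
  by rewrite -quotient_der // mem_quotient.
case/morphimP => r nKr Rr exr; have [Cr _] := setIP (subsetP (starGen_sub fG) r Rr).
have Kxr : x * r^-1 \in K.
  have nKx := nKG' x Gx.
  apply: coset_idr; first by rewrite groupM ?groupV.
  by rewrite morphM ?morphV ?groupV //= exr mulgV.
by rewrite -(mulgKV r x) groupM // (subsetP sKR) // inE Kxr groupM ?groupV.
Qed.

Lemma fpf_four_subcent1_der1 (gT : finGroupType) (G : {group gT}) a b c :
    nilpotent G -> fpf_four G a b c ->
  'C_G[c] :&: G^`(1) \subset starGen 'C_G[a] 'C_G[b] 'C_G[c].
Proof.
move: {2}_.+1 (ltnSn #|G|) => n; elim: n gT G a b c => // n IHn gT G a b c.
rewrite ltnS => leGn nilG fG; have [_ /and3P[nGa nGb _] _ _ _] := fG.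
have [abG | nabG] := boolP (abelian G); first by rewrite (derG1P abG) setIg1 sub1G.
have [M chM [ntN cNG]] := nilpotent_central_commg nilG nabG.
have chN : [~: M, G]%G \char G := charR chM (char_refl G).
apply: (subcent1_der1_lift fG chN).
  exact: fpf_four_central_commg fG (char_sub chM) (char_norm1 chM nGa)
    (char_norm1 chM nGb) cNG.
apply: IHn (quotient_nil _ nilG) (fpf_four_quotient fG chN).
by apply: leq_trans leGn; rewrite ltn_quotient // char_sub.
Qed.


Lemma nilpotent_regular_2group_odd (gT : finGroupType) (G V : {group gT}) :
  nilpotent G -> V \subset 'N(G) -> 2.-group V -> 'C_G(V) = 1 -> odd #|G|.
Proof.
move=> nilG nGV pV regV; set P := 'O_2(G).
suff P1 : P = 1.
  have := nilpotent_pcore_Hall 2 nilG; rewrite -/P P1 /pHall => /and3P[_ _].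
  by rewrite indexg1 p'natE // dvdn2 negbK.
apply/eqP; apply: contraT => ntP.
have nPV : V \subset 'N(P) := char_norm_trans (pcore_char 2 G) nGV.
have pPV : 2.-group (P <*> V) by rewrite norm_joinEr // pgroupM pcore_pgroup.
have nsPPV : P <| P <*> V by rewrite normalYl.
have [x /setIP[Px /setIP[_ cPVx]] ntx] :=
  trivgPn _ (meet_center_nil (pgroup_nil pPV) nsPPV ntP).
have : x \in 'C_G(V).
  by rewrite inE (subsetP (pcore_sub 2 G)) // (subsetP (centS (joing_subr P V))).
by rewrite regV inE (negbTE ntx).
Qed.

Lemma subcent1I_sub_subcent (gT : finGroupType) (G V : {set gT}) x y :
  {subset V <= [set 1; x; y; x * y]} -> 'C_G[x] :&: 'C_G[y] \subset 'C_G(V).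
Proof.
move=> sV; apply/subsetP => g /setIP[/setIP[Gg /cent1P cgx] /setIP[_ /cent1P cgy]].
rewrite inE Gg; apply/centP => z /sV; rewrite !inE => /orP[/orP[/orP[]|]|] /eqP->.
- exact: commute1.
- exact: cgx.
- exact: cgy.
- exact: commuteM cgx cgy.
Qed.

Lemma fpf_four_of_four_group (gT : finGroupType) (G V : {group gT}) (v1 v2 v3 : gT) :
    nilpotent G -> V \subset 'N(G) -> (V : {set gT}) = [set 1; v1; v2; v3] -> #|V| = 4 ->
    v1 ^+ 2 = 1 -> v2 ^+ 2 = 1 -> v3 ^+ 2 = 1 -> 'C_G(V) = 1 ->
  fpf_four G v1 v2 v3.
Proof.
move=> nilG nGV defV oV v1sq v2sq v3sq regV.
have : uniq [:: 1; v1; v2; v3].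
  by apply/card_uniqP; rewrite /= -oV defV; apply: eq_card => z; rewrite !inE !orbA.
rewrite /= !inE !negb_or => /and4P[/and3P[v1n1 v2n1 _] /andP[v12 _] _ _].
have Vv z : z \in [:: v1; v2; v3] -> z \in V.
  by rewrite defV !inE => /or3P[] ->; rewrite ?orbT.
have e12 : v1 * v2 = v3.
  have : v1 * v2 \in V by rewrite groupM ?Vv // !inE eqxx ?orbT.
  rewrite defV !inE => /orP[/orP[/orP[]|]|] /eqP // e.
  - by move: v12; rewrite -(mulKg v1 v2) e mulg1 invg_involution ?eqxx.
  - by move: v2n1; rewrite -(mulKg v1 v2) e mulVg eqxx.
  - by move: v1n1; rewrite -(mulgK v2 v1) e mulgV eqxx.
have e13 : v1 * v3 = v2 by rewrite -e12 mulgA -expg2 v1sq mul1g.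
have e23 : v2 * v3 = v1.
  by rewrite -(invg_involution v3sq) -e12 invMg !invg_involution // mulgA -expg2 v2sq mul1g.
have TI x y : {subset V <= [set 1; x; y; x * y]} -> 'C_G[x] :&: 'C_G[y] = 1.
  by move=> sV; apply/trivgP; rewrite -regV subcent1I_sub_subcent.
split.
- by apply: nilpotent_regular_2group_odd nilG nGV _ regV; rewrite /pgroup oV.
- by rewrite !(subsetP nGV) ?Vv // !inE eqxx ?orbT.
- by [].
- by rewrite e12 -expg2 v3sq.
split; apply: TI => z; rewrite defV ?e12 ?e13 ?e23 !inE.
all: by case/orP=> [/orP[/orP[]|]|] ->; rewrite ?orbT.
Qed.

Lemma fpf_four_subcent1_der1_eq (gT : finGroupType) (G : {group gT}) a b c :
    nilpotent G -> fpf_four G a b c ->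
  'C_G[c] :&: G^`(1) = starGen 'C_G[a] 'C_G[b] 'C_G[c].
Proof.
move=> nilG fG; apply/eqP.
by rewrite eqEsubset fpf_four_subcent1_der1 // starGen_sub.
Qed.

Theorem lemma4p7 (gT : finGroupType) (G V : {group gT}) (v1 v2 v3 : gT) :
  nilpotent G ->
  V \subset 'N(G) ->
  (V : {set gT}) = [set 1; v1; v2; v3] ->
  #|V| = 4 ->
  v1 ^+ 2 = 1 -> v2 ^+ 2 = 1 -> v3 ^+ 2 = 1 ->
  'C_G(V) = 1 ->
  [/\ 'C_G[v1] :&: G^`(1) = starGen 'C_G[v2] 'C_G[v3] 'C_G[v1],
      'C_G[v2] :&: G^`(1) = starGen 'C_G[v1] 'C_G[v3] 'C_G[v2]
    & 'C_G[v3] :&: G^`(1) = starGen 'C_G[v1] 'C_G[v2] 'C_G[v3]].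
Proof.
move=> nilG nGV defV oV v1sq v2sq v3sq regV.
have fG := fpf_four_of_four_group nilG nGV defV oV v1sq v2sq v3sq regV.
split; apply: fpf_four_subcent1_der1_eq nilG _.
- exact: fpf_four_rot fG.
- exact: fpf_four_perm23 fG.
- exact: fG.
Qed.
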